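(* Let $\omega=\omega_0\omega_1\cdots$ be an infinite sequence over $\{b,c,d\}$ and let $n\ge1$ be such that $\omega_{n-1}=d$. Then in $G_\omega$ (indeed in $\mathrm{Aut}(\mathbf{T})$) we have $(a d_k)^{2^{n-k+1}}=1$ for every $0\le k<n$.
   Context: Let $\mathbf{T}=\{0,1\}^*$ be the rooted binary tree of finite binary strings, and $a$ the automorphism flipping the first bit of a string ($a$ fixes the empty string). For an infinite sequence $\omega$ over $\{b,c,d\}$, each $x\in\{b,c,d\}$ and each $n\ge0$, the automorphism $x_n$ is defined by $x_n(1^j)=1^j$ for all $j\ge0$, and $x_n(1^j0s)=1^j0s$ if $\omega_{n+j}=x$, $x_n(1^j0s)=1^j0a(s)$ if $\omega_{n+j}\ne x$, for all $j\ge0$ and strings $s$. In particular $d_k$ denotes the element $x_k$ for $x=d$. The generalized Grigorchuk group is $G_\omega=\langle a,b_0,c_0,d_0\rangle$. *)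

(* Vertices of the binary tree T = {0,1}^* are boolean
   sequences (false = 0, true = 1); automorphisms are functions on them. *)
From mathcomp Require Import all_boot.
Set Implicit Arguments. Unset Strict Implicit. Unset Printing Implicit Defensive.

Inductive letter := lb | lc | ld.

Definition letter_eqb (x y : letter) : bool :=
  match x, y with lb, lb | lc, lc | ld, ld => true | _, _ => false end.

Definition word := nat -> letter.

Definition tree_a (s : seq bool) : seq bool :=
  match s with [::] => [::] | x :: t => (~~ x) :: t end.

(* x_n, for x in {b,c,d}, relative to omega:
   x_n(1^j) = 1^j, x_n(1^j 0 s) = 1^j 0 s if omega_{n+j} = x,
   and 1^j 0 a(s) otherwise. *)
Fixpoint tree_x (omega : word) (x : letter) (n : nat) (s : seq bool)
  : seq bool :=
  match s with
  | [::] => [::]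
  | true :: t => true :: tree_x omega x n.+1 t
  | false :: t => false :: (if letter_eqb (omega n) x then t else tree_a t)
  end.

Definition tree_d (omega : word) (k : nat) := tree_x omega ld k.

(* Write f_k := a d_k.  Its square fixes the first letter and acts on the
   two subtrees by d_{k+1} x and x d_{k+1}, where x = 1 if omega_k = d and
   x = a otherwise.  If omega_k = d both sections are the involution d_{k+1},
   so f_k^4 = 1.  Otherwise both sections are conjugate to f_{k+1}, so the
   order of f_k is at most twice that of f_{k+1}.  Descending from k to the
   index n-1, where omega_{n-1} = d, gives the bound 2^(n-1-k) * 4. *)

From mathcomp Require Import all_boot.

Set Implicit Arguments.
Unset Strict Implicit.
Unset Printing Implicit Defensive.

Lemma iter_mull_id (T : Type) (f : T -> T) m c :
  iter m f =1 id -> iter (c * m) f =1 id.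
Proof. by move=> fm x; rewrite iterM; elim: c => //= c ->; apply: fm. Qed.

Lemma iter_id_swap (T : Type) (p q : T -> T) m :
  injective p -> iter m (p \o q) =1 id -> iter m (q \o p) =1 id.
Proof.
move=> p_inj pq_id x; apply: p_inj.
have iter_shift y : p (iter m (q \o p) y) = iter m (p \o q) (p y).
  by elim: m {pq_id} => //= m ->.
by rewrite iter_shift pq_id.
Qed.

Lemma iter_cons (g h : seq bool -> seq bool) b :
  (forall u, g (b :: u) = b :: h u) ->
  forall m t, iter m g (b :: t) = b :: iter m h t.
Proof. by move=> gE m t; elim: m => //= m ->; rewrite gE. Qed.

Lemma tree_aK : involutive tree_a.
Proof. by case=> //= x t; rewrite negbK. Qed.

Lemma tree_xK omega x n : involutive (tree_x omega x n).
Proof.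
move=> s; elim: s n => [|[] t IH] n //=; first by rewrite IH.
by case: letter_eqb; rewrite ?tree_aK.
Qed.

Section TreeAD.

Variable omega : word.

Definition tree_ad k := tree_a \o tree_d omega k.

Definition tree_d_section0 k : seq bool -> seq bool :=
  if letter_eqb (omega k) ld then id else tree_a.

Lemma tree_ad_nil k m : iter m (tree_ad k) [::] = [::].
Proof. by elim: m => //= m ->. Qed.

Lemma tree_ad_sqr_cons k b t :
  iter 2 (tree_ad k) (b :: t) =
  b :: (if b then tree_d_section0 k \o tree_d omega k.+1
        else tree_d omega k.+1 \o tree_d_section0 k) t.
Proof.
rewrite /tree_ad /tree_d_section0 /tree_d.
by case: b => /=; case: letter_eqb.
Qed.

Lemma iter_tree_ad_sections k m :
  (forall b, iter m (if b then tree_d_section0 k \o tree_d omega k.+1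
                     else tree_d omega k.+1 \o tree_d_section0 k) =1 id) ->
  iter (m * 2) (tree_ad k) =1 id.
Proof.
move=> sec_id [|b t]; first exact: tree_ad_nil.
by rewrite iterM (iter_cons (tree_ad_sqr_cons k b)) sec_id.
Qed.

Lemma tree_ad_order4 k : omega k = ld -> iter 4 (tree_ad k) =1 id.
Proof.
move=> dk; apply: (@iter_tree_ad_sections k 2) => b s.
by rewrite /tree_d_section0 dk; case: b => /=; rewrite /tree_d tree_xK.
Qed.

Lemma tree_ad_order_double k m : omega k <> ld ->
  iter m (tree_ad k.+1) =1 id -> iter (m * 2) (tree_ad k) =1 id.
Proof.
move=> not_dk ad_id; apply: iter_tree_ad_sections.
have -> : tree_d_section0 k = tree_a.
  by rewrite /tree_d_section0; case: (omega k) not_dk.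
case; first exact: ad_id.
exact: iter_id_swap (can_inj tree_aK) ad_id.
Qed.

Lemma tree_ad_order_pow2 k j : omega (k + j) = ld ->
  iter (2 ^ j.+2) (tree_ad k) =1 id.
Proof.
elim: j k => [|j IH] k dkj.
  by apply: tree_ad_order4; rewrite -dkj addn0.
case dk: (omega k); last first.
  have -> : 2 ^ j.+3 = 2 ^ j.+1 * 4 by rewrite -(addn2 j.+1) expnD.
  exact/iter_mull_id/tree_ad_order4.
all: rewrite expnSr; apply: tree_ad_order_double; first by rewrite dk.
all: by apply: IH; rewrite addSnnS.
Qed.

End TreeAD.

Theorem lemma6p2 (omega : word) (n : nat) :
  1 <= n -> omega n.-1 = ld ->
  forall k : nat, k < n ->
  forall s : seq bool,
    iter (2 ^ (n - k + 1)) (fun t => tree_a (tree_d omega k t)) s = s.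
Proof.
case: n => // n _ d_last k lt_kn s.
have exp_eq : n.+1 - k + 1 = (n - k).+2 by rewrite subSn // addn1.
have idx_eq : k + (n - k) = n by rewrite subnKC.
by rewrite exp_eq; apply: tree_ad_order_pow2; rewrite idx_eq.
Qed.
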